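(* Let $r\ge2$, let $s_1,\dots,s_r,n$ be independent indeterminates over $\mathbb{Q}$, and let $R_1=n\,S_r(r\varphi(t)-t\varphi'(t))-S_r(\varphi(t))\,\mathrm{diag}(r-1,r-2,\ldots,1,0)$. Then \[ R_1^{-1}=\frac1n\,Q\left(\frac{r-1}{r},\frac{r-2}{r},\ldots,\frac1r,\frac0r\right)\mathrm{diag}(\zeta_1,\ldots,\zeta_r)\,P\left(-\frac{2r-1}{r},-\frac{2r-2}{r},\ldots,-\frac{r+1}{r},-\frac rr\right), \] where $\zeta_i=\frac{n}{rn-(r-i)}$ for $1\le i\le r$.
   Context: $\varphi(t)=1+s_1t+\cdots+s_rt^r$. For $\lambda\in\mathbb{C}$ and $\ell\in\mathbb{Z}$, $\beta_\ell(\lambda)$ is the coefficient of $t^\ell$ in $\varphi(t)^\lambda$ (so $\beta_0=1$, $\beta_\ell=0$ for $\ell<0$). For $\lambda_1,\dots,\lambda_m$, $P(\lambda_1,\ldots,\lambda_m)$ is the $m\times m$ matrix with $(i,j)$ entry $\beta_{i-j}(\lambda_i)$; $Q(\mu_1,\ldots,\mu_m)$ is the $m\times m$ matrix with $(i,j)$ entry $\beta_{i-j}(\mu_j)$. For a power series $\psi(t)=a_0+a_1t+\cdots$, $S_m(\psi(t))$ is the $m\times m$ matrix with $(i,j)$ entry $a_{i-j}$ ($a_i=0$ for $i<0$). *)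

From HB Require Import structures.
From mathcomp Require Import all_boot all_order all_algebra.
From mathcomp Require Import mpoly.
Set Implicit Arguments. Unset Strict Implicit. Unset Printing Implicit Defensive.
Import Order.TTheory GRing.Theory Num.Theory.
Local Open Scope ring_scope.

Section Defs.
Variable K : fieldType.

(* phi(t) = 1 + s_1 t + ... + s_r t^r, with s : 'I_r -> K (s (i) = s_{i+1}) *)
Definition phi (r : nat) (s : 'I_r -> K) : {poly K} :=
  1 + \sum_(i < r) s i *: 'X^(i.+1).

Definition gbinom (lam : K) (k : nat) : K :=
  (\prod_(i < k) (lam - i%:R)) / (k`!)%:R.

(* beta_l(lam) = coefficient of t^l in phi(t)^lam
   = coefficient of t^l in sum_k binom(lam,k) (phi(t)-1)^k  (binomial series);
   beta_l = 0 for l < 0. *)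
Definition beta (r : nat) (s : 'I_r -> K) (l : int) (lam : K) : K :=
  match l with
  | Posz m => \sum_(k < m.+1) gbinom lam k * ((phi s - 1) ^+ k)`_m
  | Negz _ => 0
  end.

Definition Pmx (r : nat) (s : 'I_r -> K) (m : nat) (lam : 'I_m -> K) : 'M[K]_m :=
  \matrix_(i < m, j < m) beta s (i%:Z - j%:Z) (lam i).

Definition Qmx (r : nat) (s : 'I_r -> K) (m : nat) (mu : 'I_m -> K) : 'M[K]_m :=
  \matrix_(i < m, j < m) beta s (i%:Z - j%:Z) (mu j).

Definition Smx (m : nat) (psi : {poly K}) : 'M[K]_m :=
  \matrix_(i < m, j < m) (if (j <= i)%N then psi`_(i - j) else 0).

End Defs.

(* The field Q(s_1,...,s_r,n): fractions of polynomials in r+1 indeterminates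
   over rat; variables 'X_0..'X_(r-1) are s_1..s_r, 'X_r is n. *)
Definition QSn (r : nat) := {fraction {mpoly rat[r.+1]}}.

Definition s_ind (r : nat) (i : 'I_r) : QSn r :=
  tofrac ('X_(widen_ord (leqnSn r) i) : {mpoly rat[r.+1]}).

Definition n_ind (r : nat) : QSn r :=
  tofrac ('X_(ord_max) : {mpoly rat[r.+1]}).

From HB Require Import structures.
From mathcomp Require Import all_boot all_order all_algebra.
From mathcomp Require Import mpoly.
From mathcomp Require Import ring zify.

Set Implicit Arguments.
Unset Strict Implicit.
Unset Printing Implicit Defensive.

Import GRing.Theory Num.Theory.
Local Open Scope ring_scope.

(* Let θ = X d/dX, and let E_a be the binomial series of phi^a = (1 + (phi - 1))^a
   truncated after r terms: its coefficients of degree < r are the beta_l(a),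
   and modulo X^r it satisfies phi θE_a = a θphi E_a.  By this equation R1 maps
   the j-th column X^j E_(mu_j) of Q, modulo X^r, to (r n - (r-1-j)) D X^j E_(mu_j)
   with D = phi - θphi / r, and zeta_j turns the scalar into n.  It remains that
   P times the matrix of the D X^j E_(mu_j) is the identity.  Its (i, j) entry is
   the coefficient of degree d = i - j in G D, where G = E_(lam_i) E_(mu_j) solves
   the equation with exponent c = lam_i + mu_j = d / r - 1; comparing degree-d
   coefficients in θ(phi G) = (c + 1) θphi G modulo X^r shows that it vanishes
   for d > 0.  Over Q(s, n) the scalars n and r n - m (m < r) are nonzero, as
   evaluation at s = n = 1 shows. *)

Section EulerOperator.
Variable K : fieldType.
Implicit Types (p F G : {poly K}) (a b : K).

Lemma coef_dvdXn N p i : 'X^N %| p -> (i < N)%N -> p`_i = 0.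
Proof. by move=> /dvdpP[q ->] ltiN; rewrite coefMXn ltiN. Qed.

Definition euler_op p := 'X * p^`().

Lemma coef_euler_op p i : (euler_op p)`_i = p`_i *+ i.
Proof. by case: i => [|i]; rewrite coefXM ?mulr0n //= coef_deriv. Qed.

Lemma euler_opM F G : euler_op (F * G) = euler_op F * G + F * euler_op G.
Proof. by rewrite /euler_op derivM; ring. Qed.

Lemma euler_op_Xn j : euler_op 'X^j = j%:R *: 'X^j :> {poly K}.
Proof.
rewrite /euler_op derivXn; case: j => [|j]; first by rewrite mulr0n mulr0 scale0r.
by rewrite mulrnAr -exprS scaler_nat.
Qed.

Definition pow_ode N p a F := 'X^N %| p * euler_op F - a *: (euler_op p * F).

Lemma pow_odeM N p a b F G :
  pow_ode N p a F -> pow_ode N p b G -> pow_ode N p (a + b) (F * G).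
Proof.
rewrite /pow_ode => odeF odeG.
have -> : p * euler_op (F * G) - (a + b) *: (euler_op p * (F * G))
    = (p * euler_op F - a *: (euler_op p * F)) * G
      + F * (p * euler_op G - b *: (euler_op p * G)).
  by rewrite euler_opM -!mul_polyC; ring.
by apply: dvdp_add; [apply: dvdp_mulr | apply: dvdp_mull].
Qed.

Lemma pow_ode_mulXn N p a F j : pow_ode N p a F ->
  'X^N %| p * euler_op ('X^j * F) - (j%:R *: p + a *: euler_op p) * ('X^j * F).
Proof.
rewrite /pow_ode => odeF.
have -> : p * euler_op ('X^j * F) - (j%:R *: p + a *: euler_op p) * ('X^j * F)
    = 'X^j * (p * euler_op F - a *: (euler_op p * F)).
  by rewrite euler_opM euler_op_Xn -!mul_polyC; ring.
exact: dvdp_mull.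
Qed.

End EulerOperator.

Section CharZero.
Variable K : fieldType.
Hypothesis charK : [pchar K] =i pred0.
Implicit Types (p u G : {poly K}) (a c k : K).

Lemma char0_natf_eq0 n : (n%:R == 0 :> K) = (n == 0)%N.
Proof. exact: (pcharf0P K).1. Qed.

Lemma coef_pow_ode_euler N p G c k d :
    p`_0 = 1 -> G`_0 = 1 -> pow_ode N p c G -> k != 0 ->
    (c + 1) * k = d%:R -> (d < N)%N ->
  (G * (p - k^-1 *: euler_op p))`_d = (d == 0)%:R.
Proof.
move=> p0 G0 odeG k_neq0 ck_d ltdN.
case: d ck_d ltdN => [|d] ck_d ltdN.
  by rewrite coef0M coefB coefZ coef_euler_op mulr0n mulr0 subr0 p0 G0 mulr1.
have dvd_euler : 'X^N %| euler_op (p * G) - (c + 1) *: (euler_op p * G).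
  have -> : euler_op (p * G) - (c + 1) *: (euler_op p * G)
      = p * euler_op G - c *: (euler_op p * G).
    by rewrite euler_opM -!mul_polyC; ring.
  exact: odeG.
have -> : G * (p - k^-1 *: euler_op p) = p * G - k^-1 *: (euler_op p * G).
  by rewrite -!mul_polyC; ring.
have c1 : c + 1 = d.+1%:R / k by rewrite -ck_d mulfK.
have := coef_dvdXn dvd_euler ltdN.
rewrite coefB coefZ coef_euler_op c1 => /eqP; rewrite subr_eq0 => /eqP coef_euler.
rewrite coefB coefZ /=; apply/eqP; rewrite mulr0n subr_eq0; apply/eqP.
apply: (mulIf (_ : d.+1%:R != 0)); first by rewrite char0_natf_eq0.
by rewrite mulr_natr coef_euler; ring.
Qed.

Lemma gbinom0 a : gbinom a 0 = 1.
Proof. by rewrite /gbinom big_ord0 fact0 divr1. Qed.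

Lemma gbinomS a j : j.+1%:R * gbinom a j.+1 = (a - j%:R) * gbinom a j.
Proof.
have fact_neq0 : j`!%:R != 0 :> K by rewrite char0_natf_eq0 -lt0n fact_gt0.
have Sj_neq0 : j.+1%:R != 0 :> K by rewrite char0_natf_eq0.
rewrite /gbinom big_ord_recr /= factS natrM; field.
by rewrite fact_neq0 addrC natr1.
Qed.

Definition binom_series u a N := \sum_(j < N) gbinom a j *: u ^+ j.

Lemma binom_series_ode u a N :
  (1 + u) * (binom_series u a N.+1)^`() - a *: (u^`() * binom_series u a N.+1)
    = ((N%:R - a) * gbinom a N) *: (u^`() * u ^+ N).
Proof.
elim: N => [|N IHN].
  rewrite /binom_series big_ord1 gbinom0 scale1r !expr0 -polyC1 derivC.
  by rewrite mulr0 !sub0r !mulr1 scaleNr.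
rewrite /binom_series big_ord_recr /= -/(binom_series u a N.+1).
rewrite derivD derivZ deriv_exp /=.
move: IHN (gbinomS a N).
set E := binom_series u a N.+1; set b := gbinom a N; set b' := gbinom a N.+1.
move=> IHN b'S.
have -> : (1 + u) * (E^`() + b' *: (u^`() * u ^+ N *+ N.+1))
          - a *: (u^`() * (E + b' *: u ^+ N.+1))
    = ((1 + u) * E^`() - a *: (u^`() * E))
      + (N.+1%:R * b')%:P * (u^`() * u ^+ N)
      + (b' * (N.+1%:R - a))%:P * (u^`() * u ^+ N.+1).
  by rewrite -!mul_polyC !exprS; ring.
by rewrite IHN b'S -!mul_polyC exprS; ring.
Qed.

Lemma pow_ode_binom_series u a N :
  'X %| u -> pow_ode N (1 + u) a (binom_series u a N).
Proof.
move=> dvdXu; rewrite /pow_ode.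
case: N => [|N]; first by rewrite expr0 dvd1p.
have -> : (1 + u) * euler_op (binom_series u a N.+1)
          - a *: (euler_op (1 + u) * binom_series u a N.+1)
    = 'X * ((1 + u) * (binom_series u a N.+1)^`()
            - a *: (u^`() * binom_series u a N.+1)).
  by rewrite /euler_op derivD -polyC1 derivC add0r -!mul_polyC; ring.
rewrite binom_series_ode exprS -mul_polyC; apply: dvdp_mul (dvdpp _) _.
by do 2!apply: dvdp_mull; apply: dvdp_exp2r.
Qed.

Lemma coef0_binom_series u a N :
  'X %| u -> (0 < N)%N -> (binom_series u a N)`_0 = 1.
Proof.
move=> dvdXu; case: N => // N _.
rewrite /binom_series big_ord_recl gbinom0 scale1r coefD coef1 coef_sum.
rewrite big1 ?addr0 // => j _.
by rewrite coefZ (coef_dvdXn (dvdp_exp2r _ dvdXu)) ?mulr0.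
Qed.

End CharZero.

Section Phi.
Variables (K : fieldType) (r : nat) (s : 'I_r -> K).
Hypothesis charK : [pchar K] =i pred0.
Hypothesis r_gt0 : (0 < r)%N.

Lemma dvdX_phi_sub1 : 'X %| phi s - 1.
Proof.
have -> : phi s - 1 = 'X * \sum_(i < r) s i *: 'X^i.
  rewrite /phi [1 + _]addrC addrK mulr_sumr; apply: eq_bigr => i _.
  by rewrite exprS scalerAr.
exact: dvdp_mulIl.
Qed.

Lemma coef0_phi : (phi s)`_0 = 1.
Proof.
have := coef_dvdXn (N := 1) dvdX_phi_sub1 (ltn0Sn 0).
by rewrite coefB coef1 => /eqP; rewrite subr_eq0 => /eqP.
Qed.

Definition phi_pow a := binom_series (phi s - 1) a r.

Lemma phi_pow_ode a : pow_ode r (phi s) a (phi_pow a).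
Proof. by rewrite -[phi s](subrKC 1) pow_ode_binom_series ?dvdX_phi_sub1. Qed.

Lemma coef0_phi_pow a : (phi_pow a)`_0 = 1.
Proof. exact: coef0_binom_series dvdX_phi_sub1 r_gt0. Qed.

Lemma beta_phi_pow (i j : 'I_r) a :
  beta s (i%:Z - j%:Z) a = ('X^j * phi_pow a)`_i.
Proof.
rewrite coefXnM; case: ltnP => [ltij | leji].
  suff -> : i%:Z - j%:Z = Negz (j - i).-1 by [].
  by rewrite NegzE prednK ?subn_gt0 // -opprB subzn // ltnW.
rewrite subzn //= /phi_pow /binom_series coef_sum.
have ltr : (i - j < r)%N by rewrite (leq_ltn_trans (leq_subr _ _)).
rewrite (big_ord_widen r (fun k => gbinom a k * ((phi s - 1) ^+ k)`_(i - j)) ltr).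
rewrite big_mkcond /=; apply: eq_bigr => k _; rewrite coefZ ltnS.
by case: leqP => // ltk; rewrite (coef_dvdXn (dvdp_exp2r _ dvdX_phi_sub1)) ?mulr0.
Qed.

End Phi.

Section CoefMatrix.
Variables (K : fieldType) (r : nat).
Implicit Types (g h : 'I_r -> {poly K}) (p : {poly K}).

Definition coef_mx g : 'M[K]_r := \matrix_(i, j) (g j)`_i.

Lemma coef_mxZ (c : K) g : c *: coef_mx g = coef_mx (fun j => c *: g j).
Proof. by apply/matrixP => i j; rewrite !mxE coefZ. Qed.

Lemma coef_mxB g h : coef_mx g - coef_mx h = coef_mx (fun j => g j - h j).
Proof. by apply/matrixP => i j; rewrite !mxE coefB. Qed.

Lemma eq_coef_mx g h : (forall j, 'X^r %| g j - h j) -> coef_mx g = coef_mx h.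
Proof.
move=> dvd_gh; apply/matrixP => i j; rewrite !mxE; apply/eqP.
by rewrite -subr_eq0 -coefB (coef_dvdXn (dvd_gh j)).
Qed.

Lemma Smx_coef p (i j : 'I_r) : Smx r p i j = ('X^j * p)`_i.
Proof. by rewrite mxE coefXnM ltnNge; case: leqP. Qed.

Lemma mul_Smx_coef_mx p g : Smx r p *m coef_mx g = coef_mx (fun j => p * g j).
Proof.
apply/matrixP => i j; rewrite !mxE [p * _]mulrC coefM.
rewrite (big_ord_widen r (fun k => (g j)`_k * p`_(i - k)) (ltn_ord i)).
rewrite [RHS]big_mkcond /=.
apply: eq_bigr => k _; rewrite Smx_coef coefXnM mxE ltnS ltnNge.
by case: leqP; rewrite ?mul0r // mulrC.
Qed.

Lemma mul_coef_mx_diag g (c : 'I_r -> K) :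
  coef_mx g *m diag_mx (\row_j c j) = coef_mx (fun j => c j *: g j).
Proof. by apply/matrixP => i j; rewrite mul_mx_diag !mxE coefZ mulrC. Qed.

Lemma mul_diag_coef_mx g :
  diag_mx (\row_(i < r) (r - 1 - i)%N%:R) *m coef_mx g
    = coef_mx (fun j => (r - 1)%N%:R *: g j - euler_op (g j)).
Proof.
apply/matrixP => i j; rewrite mul_diag_mx !mxE coefB coefZ coef_euler_op.
rewrite -[_ *+ i]mulr_natl -mulrBl -natrB //.
by have := ltn_ord i; lia.
Qed.

End CoefMatrix.

Lemma invmx_right (R : comUnitRingType) m (A B : 'M[R]_m) :
  A *m B = 1%:M -> invmx A = B.
Proof.
move=> AB1; have [unitA _] := mulmx1_unit AB1.
by rewrite -[RHS]mul1mx -(mulVmx unitA) -mulmxA AB1 mulmx1.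
Qed.

Section Inverse.
Variables (K : fieldType) (r : nat) (s : 'I_r -> K) (n : K).
Hypothesis charK : [pchar K] =i pred0.
Hypothesis r_gt0 : (0 < r)%N.
Hypothesis n_neq0 : n != 0.
Hypothesis rn_neq_nat : forall m, (m < r)%N -> r%:R * n != m%:R.

Local Notation ph := (phi s).

Lemma r_neq0 : r%:R != 0 :> K.
Proof. by rewrite char0_natf_eq0 // -lt0n. Qed.

Lemma Qmx_coef_mx (mu : 'I_r -> K) :
  Qmx s mu = coef_mx (fun j => 'X^j * phi_pow s (mu j)).
Proof. by apply/matrixP => i j; rewrite !mxE beta_phi_pow. Qed.

Lemma mul_Pmx_coef_mx (lam : 'I_r -> K) (g : 'I_r -> {poly K}) (i j : 'I_r) :
  (Pmx s lam *m coef_mx g) i j = (phi_pow s (lam i) * g j)`_i.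
Proof.
transitivity ((Smx r (phi_pow s (lam i)) *m coef_mx g) i j).
  by rewrite !mxE; apply: eq_bigr => k _; rewrite mxE Smx_coef beta_phi_pow.
by rewrite mul_Smx_coef_mx mxE.
Qed.

Definition phi_euler := ph - r%:R^-1 *: euler_op ph.

Lemma mul_Pmx_phi_euler (lam mu : 'I_r -> K) :
    (forall i j : 'I_r, (j <= i)%N -> (lam i + mu j + 1) * r%:R = (i - j)%N%:R) ->
  Pmx s lam *m coef_mx (fun j => phi_euler * ('X^j * phi_pow s (mu j))) = 1%:M.
Proof.
move=> lam_mu; apply/matrixP => i j; rewrite mul_Pmx_coef_mx mxE.
have -> : phi_pow s (lam i) * (phi_euler * ('X^j * phi_pow s (mu j)))
    = 'X^j * (phi_pow s (lam i) * phi_pow s (mu j) * phi_euler) by ring.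
rewrite coefXnM; case: ltnP => [ltij | leji].
  by rewrite -val_eqE /= ltn_eqF.
have odeG := pow_odeM (phi_pow_ode s charK (lam i)) (phi_pow_ode s charK (mu j)).
rewrite (coef_pow_ode_euler charK (coef0_phi s) _ odeG r_neq0 (lam_mu _ _ leji)).
- by rewrite -val_eqE /= subn_eq0 eqn_leq leji andbT.
- by rewrite coef0M !coef0_phi_pow ?mulr1.
- by rewrite (leq_ltn_trans (leq_subr _ _)).
Qed.

Lemma R1_column_congr (j : 'I_r) (M := (r - 1 - j)%N%:R : K)
    (f := 'X^j * phi_pow s (M / r%:R)) :
  'X^r %| n *: ((r%:R *: ph - euler_op ph) * f)
          - ph * ((r - 1)%N%:R *: f - euler_op f)
          - (r%:R * n - M) *: (phi_euler * f).
Proof.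
have := pow_ode_mulXn j (phi_pow_ode s charK (M / r%:R)).
rewrite -/f; set Delta := _ - _ => dvd_Delta.
have -> : n *: ((r%:R *: ph - euler_op ph) * f)
          - ph * ((r - 1)%N%:R *: f - euler_op f)
          - (r%:R * n - M) *: (phi_euler * f)
    = Delta + (M + j%:R - (r - 1)%N%:R) *: (ph * f)
      + (M / r%:R - n + (r%:R * n - M) / r%:R) *: (euler_op ph * f).
  by rewrite /Delta /phi_euler /euler_op -!mul_polyC; ring.
have -> : M + j%:R - (r - 1)%N%:R = 0.
  by rewrite /M natrB ?subrK ?subrr //; have := ltn_ord j; lia.
have -> : M / r%:R - n + (r%:R * n - M) / r%:R = 0.
  by field; exact: r_neq0.
by rewrite !scale0r !addr0.
Qed.

Theorem invmx_R1 :
  let R1 : 'M[K]_r :=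
    n *: Smx r (r%:R *: phi s - 'X * (phi s)^`())
    - Smx r (phi s) *m diag_mx (\row_(i < r) ((r - 1 - i)%N)%:R) in
  invmx R1 =
    n^-1 *: (Qmx s (fun j : 'I_r => ((r - 1 - j)%N)%:R / r%:R)
             *m diag_mx (\row_(i < r) (n / (r%:R * n - ((r - 1 - i)%N)%:R)))
             *m Pmx s (fun i : 'I_r => - (((2 * r - 1 - i)%N)%:R / r%:R))).
Proof.
move=> R1; apply: invmx_right.
set mu := fun j : 'I_r => _ / _; set lam := fun i : 'I_r => - _.
set g := fun j : 'I_r => phi_euler * ('X^j * phi_pow s (mu j)).
have R1Q : R1 *m Qmx s mu = coef_mx (fun j => (r%:R * n - (r - 1 - j)%N%:R) *: g j).
  rewrite /R1 Qmx_coef_mx mulmxBl -scalemxAl -mulmxA mul_diag_coef_mx.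
  rewrite !mul_Smx_coef_mx coef_mxZ coef_mxB.
  by apply: eq_coef_mx => j; apply: R1_column_congr.
have lam_mu (i j : 'I_r) : (j <= i)%N -> (lam i + mu j + 1) * r%:R = (i - j)%N%:R.
  move=> leji; have ltir := ltn_ord i; have ltjr := ltn_ord j.
  rewrite /lam /mu !natrB ?natrM; try lia.
  by field; exact: r_neq0.
rewrite -scalemxAr !mulmxA R1Q mul_coef_mx_diag.
rewrite (@eq_coef_mx _ _ _ (fun j => n *: g j)) => [|j]; last first.
  rewrite scalerA mulfVK ?subrr ?dvdp0 // subr_eq0 rn_neq_nat //; lia.
rewrite -coef_mxZ -scalemxAl scalerA mulVf // scale1r.
exact: mulmx1C (mul_Pmx_phi_euler lam_mu).
Qed.

End Inverse.

Lemma tofrac_neq0_meval r (p : {mpoly rat[r.+1]}) (x : 'I_r.+1 -> rat) :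
  p.@[x] != 0 -> (tofrac p : QSn r) != 0.
Proof. by apply: contra; rewrite tofrac_eq0 => /eqP ->; rewrite meval0. Qed.

Lemma QSn_char0 r : [pchar QSn r] =i pred0.
Proof.
apply/pcharf0P => -[|k]; first by rewrite !eqxx.
have -> : k.+1%:R = tofrac (k.+1%:R : {mpoly rat[r.+1]}) by rewrite rmorph_nat.
apply/negbTE/(@tofrac_neq0_meval _ _ (fun _ => 1)).
by rewrite rmorph_nat pnatr_eq0.
Qed.

Theorem lemma13 (r : nat) (hr : (2 <= r)%N) :
  let K := QSn r in
  let s := @s_ind r in
  let n := n_ind r in
  let R1 : 'M[K]_r :=
    n *: Smx r (r%:R *: phi s - 'X * (phi s)^`())
    - Smx r (phi s) *m diag_mx (\row_(i < r) ((r - 1 - i)%N)%:R) in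
  invmx R1 =
    n^-1 *: (Qmx s (fun j : 'I_r => ((r - 1 - j)%N)%:R / r%:R)
             *m diag_mx (\row_(i < r) (n / (r%:R * n - ((r - 1 - i)%N)%:R)))
             *m Pmx s (fun i : 'I_r => - (((2 * r - 1 - i)%N)%:R / r%:R))).
Proof.
have r_gt0 : (0 < r)%N by apply: leq_trans hr.
have meval_n : ('X_ord_max : {mpoly rat[r.+1]}).@[fun _ => 1] = 1 by rewrite mevalXU.
apply: invmx_R1 (QSn_char0 r) r_gt0 _ _.
  by apply: (@tofrac_neq0_meval _ _ (fun _ => 1)); rewrite meval_n oner_neq0.
move=> m ltmr; rewrite -subr_eq0.
have -> : r%:R * n_ind r - m%:R
    = tofrac (r%:R * 'X_ord_max - m%:R : {mpoly rat[r.+1]}).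
  by rewrite rmorphB rmorphM !rmorph_nat.
apply: (@tofrac_neq0_meval _ _ (fun _ => 1)).
rewrite mevalB mevalM meval_n !mevalMn meval1 mulr1 -natrB ?pnatr_eq0 ?subn_eq0.
  by rewrite -ltnNge.
exact: ltnW.
Qed.
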